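(* Let $\mathcal U=(V,\tilde V,W,\tilde W,R)$ be a gradient space, let $\mathcal K_0\subseteq\mathrm{Sob}(\mathcal U)$ be a nonempty convex Poincaré set which is closed with respect to the norm of $V$, and let $f\in\mathrm{Sob}(\mathcal U)$. Then the Dirichlet problem with respect to $\mathcal K_f=\mathcal K_0+f$ has at least one solution, i.e. there exists $u\in\mathcal K_f$ with $\|g_u\|_W=\inf_{v\in\mathcal K_f}\|g_v\|_W$. Moreover, if $u_1,u_2$ are two solutions, then $g_{u_1}=g_{u_2}$.
   Context: Let $\tilde V,\tilde W$ be vector spaces over $\mathbf R$ or $\mathbf C$. A gradient relation is a set $R\subseteq\tilde V\times\tilde W$ such that (G1) if $(u,g)\in R$ and $(u',g')\in R$ then $(u+u',g+g')\in R$; (G2) if $(u,g)\in R$ and $\alpha>0$ then $(\alpha u,\alpha g)\in R$. A gradient space $\mathcal U=(V,\tilde V,W,\tilde W,R)$ consists of vector spaces $\tilde V,\tilde W$, a gradient relation $R\subseteq\tilde V\times\tilde W$, and linear subspaces $V\subseteq\tilde V$, $W\subseteq\tilde W$ such that: (GS1) $V$ is a reflexive Banach space with norm $\|\cdot\|_V$; (GS2) $W$ is a reflexive and strictly convex Banach space with norm $\|\cdot\|_W$; (GS3) if $(u,g)\in R$ with $u\in V$, $g\in W$, then there exists $g'\in W$ with $(-u,g')\in R$; (GS4) if $u,u_i\in V$ and $g,g_i\in W$ with $(u_i,g_i)\in R$ for $i=1,2,\dots$, $\|u-u_i\|_V\to0$ and $\|g-g_i\|_W\to0$, then $(u,g)\in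 R$. The Sobolev space of $\mathcal U$ is $\mathrm{Sob}(\mathcal U)=\{u\in V:(u,g)\in R\text{ for some }g\in W\}$. Each $u\in\mathrm{Sob}(\mathcal U)$ has a unique minimal gradient $g_u\in W$: $(u,g_u)\in R$ and $\|g_u\|_W\le\|g\|_W$ for all $g\in W$ with $(u,g)\in R$. A Poincaré set is a subset $A\subseteq\mathrm{Sob}(\mathcal U)$ for which there is $C>0$ such that $\|u\|_V\le C\|g\|_W$ for all $u\in A$ and all $g\in W$ with $(u,g)\in R$. For $\mathcal K_0\subseteq\mathrm{Sob}(\mathcal U)$ and $f\in\mathrm{Sob}(\mathcal U)$, $\mathcal K_f=\mathcal K_0+f=\{v\in\mathrm{Sob}(\mathcal U):v-f\in\mathcal K_0\}$; a solution of the Dirichlet problem with respect to $\mathcal K_f$ is $u\in\mathcal K_f$ with $\|g_u\|_W=\inf_{v\in\mathcal K_f}\|g_v\|_W$. *)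

From Stdlib Require Import Reals.
Open Scope R_scope.

Record VectSpace (X : Type) := {
  vzero : X;
  vadd : X -> X -> X;
  vopp : X -> X;
  vscal : R -> X -> X;
  vadd_assoc : forall x y z, vadd x (vadd y z) = vadd (vadd x y) z;
  vadd_comm : forall x y, vadd x y = vadd y x;
  vadd_0 : forall x, vadd vzero x = x;
  vadd_opp : forall x, vadd x (vopp x) = vzero;
  vscal_assoc : forall a b x, vscal a (vscal b x) = vscal (a * b) x;
  vscal_1 : forall x, vscal 1 x = x;
  vscal_addr : forall a x y, vscal a (vadd x y) = vadd (vscal a x) (vscal a y);
  vscal_addl : forall a b x, vscal (a + b) x = vadd (vscal a x) (vscal b x)
}.

Arguments vzero {X} _.
Arguments vadd {X} _ _ _.
Arguments vopp {X} _ _.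
Arguments vscal {X} _ _ _.

Definition vsub {X} (S : VectSpace X) (x y : X) : X := vadd S x (vopp S y).

Definition is_subspace {X} (S : VectSpace X) (P : X -> Prop) : Prop :=
  P (vzero S) /\
  (forall x y, P x -> P y -> P (vadd S x y)) /\
  (forall a x, P x -> P (vscal S a x)).

(** [n] is a norm on the subspace [P] (values outside [P] are irrelevant). *)
Definition is_norm_on {X} (S : VectSpace X) (P : X -> Prop) (n : X -> R) : Prop :=
  (forall x, P x -> 0 <= n x) /\
  (forall x, P x -> n x = 0 -> x = vzero S) /\
  (forall a x, P x -> n (vscal S a x) = Rabs a * n x) /\
  (forall x y, P x -> P y -> n (vadd S x y) <= n x + n y).

Definition is_complete {X} (S : VectSpace X) (P : X -> Prop) (n : X -> R) : Prop :=
  forall s : nat -> X, (forall k, P (s k)) ->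
    (forall eps, eps > 0 -> exists N, forall p q, (p >= N)%nat -> (q >= N)%nat ->
        n (vsub S (s p) (s q)) < eps) ->
    exists x, P x /\ Un_cv (fun k => n (vsub S (s k) x)) 0.

Definition is_Banach {X} (S : VectSpace X) (P : X -> Prop) (n : X -> R) : Prop :=
  is_subspace S P /\ is_norm_on S P n /\ is_complete S P n.

Definition is_linear_on {X} (S : VectSpace X) (P : X -> Prop) (phi : X -> R) : Prop :=
  (forall x y, P x -> P y -> phi (vadd S x y) = phi x + phi y) /\
  (forall a x, P x -> phi (vscal S a x) = a * phi x).

Definition fbound {X} (P : X -> Prop) (n : X -> R) (phi : X -> R) (M : R) : Prop :=
  forall x, P x -> Rabs (phi x) <= M * n x.

Definition is_dual_elt {X} (S : VectSpace X) (P : X -> Prop) (n : X -> R)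
  (phi : X -> R) : Prop :=
  is_linear_on S P phi /\ exists M, fbound P n phi M.

(** Continuous linear functionals on the dual (elements of the bidual).
    Functionals are identified when they agree on [P]. *)
Definition is_bidual_elt {X} (S : VectSpace X) (P : X -> Prop) (n : X -> R)
  (Psi : (X -> R) -> R) : Prop :=
  (forall phi psi, is_dual_elt S P n phi -> (forall x, P x -> phi x = psi x) ->
      Psi phi = Psi psi) /\
  (forall phi psi, is_dual_elt S P n phi -> is_dual_elt S P n psi ->
      Psi (fun x => phi x + psi x) = Psi phi + Psi psi) /\
  (forall a phi, is_dual_elt S P n phi -> Psi (fun x => a * phi x) = a * Psi phi) /\
  (exists C, forall phi M, is_dual_elt S P n phi -> fbound P n phi M ->
      Rabs (Psi phi) <= C * M).

Definition is_reflexive {X} (S : VectSpace X) (P : X -> Prop) (n : X -> R) : Prop :=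
  forall Psi, is_bidual_elt S P n Psi ->
    exists x, P x /\ forall phi, is_dual_elt S P n phi -> Psi phi = phi x.

Definition is_strictly_convex {X} (S : VectSpace X) (P : X -> Prop) (n : X -> R) : Prop :=
  forall x y, P x -> P y -> n x = 1 -> n y = 1 -> x <> y ->
    n (vscal S (/2) (vadd S x y)) < 1.

Record GradientSpace := {
  Vt : Type;
  Wt : Type;
  VS : VectSpace Vt;
  WS : VectSpace Wt;
  Vp : Vt -> Prop;
  Wp : Wt -> Prop;
  nV : Vt -> R;
  nW : Wt -> R;
  Rel : Vt -> Wt -> Prop;
  G1 : forall u g u' g', Rel u g -> Rel u' g' -> Rel (vadd VS u u') (vadd WS g g');
  G2 : forall u g a, Rel u g -> a > 0 -> Rel (vscal VS a u) (vscal WS a g);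
  GS1 : is_Banach VS Vp nV /\ is_reflexive VS Vp nV;
  GS2 : is_Banach WS Wp nW /\ is_reflexive WS Wp nW /\ is_strictly_convex WS Wp nW;
  GS3 : forall u g, Rel u g -> Vp u -> Wp g -> exists g', Wp g' /\ Rel (vopp VS u) g';
  GS4 : forall u g (us : nat -> Vt) (gs : nat -> Wt),
      Vp u -> Wp g -> (forall i, Vp (us i)) -> (forall i, Wp (gs i)) ->
      (forall i, Rel (us i) (gs i)) ->
      Un_cv (fun i => nV (vsub VS u (us i))) 0 ->
      Un_cv (fun i => nW (vsub WS g (gs i))) 0 ->
      Rel u g
}.

Section GS.
Variable U : GradientSpace.

Definition Sob (u : Vt U) : Prop := Vp U u /\ exists g, Wp U g /\ Rel U u g.

Definition is_min_grad (u : Vt U) (g : Wt U) : Prop :=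
  Wp U g /\ Rel U u g /\ forall g', Wp U g' -> Rel U u g' -> nW U g <= nW U g'.

Definition is_Poincare_set (A : Vt U -> Prop) : Prop :=
  (forall u, A u -> Sob u) /\
  exists C, C > 0 /\ forall u g, A u -> Wp U g -> Rel U u g -> nV U u <= C * nW U g.

Definition is_convex_set (A : Vt U -> Prop) : Prop :=
  forall u v t, A u -> A v -> 0 <= t <= 1 ->
    A (vadd (VS U) (vscal (VS U) t u) (vscal (VS U) (1 - t) v)).

Definition is_V_closed (A : Vt U -> Prop) : Prop :=
  forall (us : nat -> Vt U) u, (forall i, A (us i)) -> Vp U u ->
    Un_cv (fun i => nV U (vsub (VS U) (us i) u)) 0 -> A u.

Definition Kshift (K0 : Vt U -> Prop) (f : Vt U) (v : Vt U) : Prop :=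
  Sob v /\ K0 (vsub (VS U) v f).

Definition is_Dirichlet_solution (K : Vt U -> Prop) (u : Vt U) : Prop :=
  K u /\ exists gu, is_min_grad u gu /\
    forall v gv, K v -> is_min_grad v gv -> nW U gu <= nW U gv.

End GS.

(* Existence is the direct method in V x W: minimise the W-norm of g over the
   convex set of pairs (v, g) with v in K_f and (v, g) in R, on which the Poincare
   inequality bounds v in terms of g. Instead of extracting weakly convergent
   subsequences, a minimising sequence is sent to its limit along a Banach limit
   (a Hahn-Banach extension of lim sup), which reflexivity realises as a point of
   V x W; separating points from closed convex sets (Mazur) shows that this point
   lies in every closed convex sublevel set, hence is a minimiser. The minimal
   gradients of two solutions have the same norm, and the midpoint of the
   solutions is admissible with the midpoint of their gradients as a gradient, so
   strict convexity of W forces them to coincide. *)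

From Stdlib Require Import Reals Lra Lia Classical ClassicalEpsilon FunctionalExtensionality.
From mathcomp Require classical_sets.
Open Scope R_scope.

Section VectorAlgebra.
Context {X : Type} (S : VectSpace X).

Lemma vadd_0r x : vadd S x (vzero S) = x.
Proof. rewrite vadd_comm; apply vadd_0. Qed.

Lemma vadd_ACA p q r s :
  vadd S (vadd S p q) (vadd S r s) = vadd S (vadd S p r) (vadd S q s).
Proof.
rewrite <- !vadd_assoc; f_equal.
rewrite !vadd_assoc; f_equal; apply vadd_comm.
Qed.

Lemma vadd_inj_l x y z : vadd S x y = vadd S x z -> y = z.
Proof.
intros H; rewrite <- (vadd_0 _ S y), <- (vadd_0 _ S z), <- (vadd_opp _ S x).
rewrite (vadd_comm _ S x), <- !vadd_assoc, H; reflexivity.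
Qed.

Lemma vscal_0l x : vscal S 0 x = vzero S.
Proof.
apply (vadd_inj_l (vscal S 0 x)).
rewrite <- vscal_addl, vadd_0r; f_equal; ring.
Qed.

Lemma vscal_0r a : vscal S a (vzero S) = vzero S.
Proof. rewrite <- (vscal_0l (vzero S)), vscal_assoc, Rmult_0_r; reflexivity. Qed.

Lemma vopp_vscal x : vopp S x = vscal S (-1) x.
Proof.
apply (vadd_inj_l x); rewrite vadd_opp.
rewrite <- (vscal_1 _ S x) at 1; rewrite <- vscal_addl.
replace (1 + -1) with 0 by ring; symmetry; apply vscal_0l.
Qed.

(* Normal form for the [vsolve] tactic below: linear combinations of six atoms. *)
Definition lincomb (a1 a2 a3 a4 a5 a6 : R) (x1 x2 x3 x4 x5 x6 : X) : X :=
  vadd S (vscal S a1 x1) (vadd S (vscal S a2 x2) (vadd S (vscal S a3 x3)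
   (vadd S (vscal S a4 x4) (vadd S (vscal S a5 x5) (vscal S a6 x6))))).

Lemma lincomb_add a1 a2 a3 a4 a5 a6 b1 b2 b3 b4 b5 b6 x1 x2 x3 x4 x5 x6 e1 e2 :
  e1 = lincomb a1 a2 a3 a4 a5 a6 x1 x2 x3 x4 x5 x6 ->
  e2 = lincomb b1 b2 b3 b4 b5 b6 x1 x2 x3 x4 x5 x6 ->
  vadd S e1 e2 =
  lincomb (a1+b1) (a2+b2) (a3+b3) (a4+b4) (a5+b5) (a6+b6) x1 x2 x3 x4 x5 x6.
Proof.
intros -> ->; unfold lincomb.
do 5 (rewrite vadd_ACA; f_equal; [symmetry; apply vscal_addl|]).
symmetry; apply vscal_addl.
Qed.

Lemma lincomb_scal c a1 a2 a3 a4 a5 a6 x1 x2 x3 x4 x5 x6 e :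
  e = lincomb a1 a2 a3 a4 a5 a6 x1 x2 x3 x4 x5 x6 ->
  vscal S c e = lincomb (c*a1) (c*a2) (c*a3) (c*a4) (c*a5) (c*a6) x1 x2 x3 x4 x5 x6.
Proof. intros ->; unfold lincomb; rewrite !vscal_addr, !vscal_assoc; reflexivity. Qed.

Lemma lincomb_opp a1 a2 a3 a4 a5 a6 x1 x2 x3 x4 x5 x6 e :
  e = lincomb a1 a2 a3 a4 a5 a6 x1 x2 x3 x4 x5 x6 ->
  vopp S e =
  lincomb (-1*a1) (-1*a2) (-1*a3) (-1*a4) (-1*a5) (-1*a6) x1 x2 x3 x4 x5 x6.
Proof. intros ->; rewrite vopp_vscal; apply lincomb_scal; reflexivity. Qed.

Lemma lincomb_sub a1 a2 a3 a4 a5 a6 b1 b2 b3 b4 b5 b6 x1 x2 x3 x4 x5 x6 e1 e2 :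
  e1 = lincomb a1 a2 a3 a4 a5 a6 x1 x2 x3 x4 x5 x6 ->
  e2 = lincomb b1 b2 b3 b4 b5 b6 x1 x2 x3 x4 x5 x6 ->
  vsub S e1 e2 = lincomb (a1 + -1*b1) (a2 + -1*b2) (a3 + -1*b3) (a4 + -1*b4)
                   (a5 + -1*b5) (a6 + -1*b6) x1 x2 x3 x4 x5 x6.
Proof. intros H1 H2; apply lincomb_add; [exact H1 | apply lincomb_opp, H2]. Qed.

Lemma lincomb_zero x1 x2 x3 x4 x5 x6 : vzero S = lincomb 0 0 0 0 0 0 x1 x2 x3 x4 x5 x6.
Proof. unfold lincomb; rewrite !vscal_0l, !vadd_0; reflexivity. Qed.

Lemma lincomb_ext a1 a2 a3 a4 a5 a6 b1 b2 b3 b4 b5 b6 x1 x2 x3 x4 x5 x6 :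
  a1 = b1 -> a2 = b2 -> a3 = b3 -> a4 = b4 -> a5 = b5 -> a6 = b6 ->
  lincomb a1 a2 a3 a4 a5 a6 x1 x2 x3 x4 x5 x6 = lincomb b1 b2 b3 b4 b5 b6 x1 x2 x3 x4 x5 x6.
Proof. intros; subst; reflexivity. Qed.

Ltac lincomb_unit := unfold lincomb; rewrite !vscal_0l, vscal_1, !vadd_0, ?vadd_0r; reflexivity.

Lemma lincomb_atom1 x1 x2 x3 x4 x5 x6 : x1 = lincomb 1 0 0 0 0 0 x1 x2 x3 x4 x5 x6.
Proof. lincomb_unit. Qed.
Lemma lincomb_atom2 x1 x2 x3 x4 x5 x6 : x2 = lincomb 0 1 0 0 0 0 x1 x2 x3 x4 x5 x6.
Proof. lincomb_unit. Qed.
Lemma lincomb_atom3 x1 x2 x3 x4 x5 x6 : x3 = lincomb 0 0 1 0 0 0 x1 x2 x3 x4 x5 x6.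
Proof. lincomb_unit. Qed.
Lemma lincomb_atom4 x1 x2 x3 x4 x5 x6 : x4 = lincomb 0 0 0 1 0 0 x1 x2 x3 x4 x5 x6.
Proof. lincomb_unit. Qed.
Lemma lincomb_atom5 x1 x2 x3 x4 x5 x6 : x5 = lincomb 0 0 0 0 1 0 x1 x2 x3 x4 x5 x6.
Proof. lincomb_unit. Qed.
Lemma lincomb_atom6 x1 x2 x3 x4 x5 x6 : x6 = lincomb 0 0 0 0 0 1 x1 x2 x3 x4 x5 x6.
Proof. lincomb_unit. Qed.

End VectorAlgebra.

Ltac reify_lincomb x1 x2 x3 x4 x5 x6 :=
  lazymatch goal with
  | |- ?e = _ =>
    first
    [ constr_eq e x1; eapply (lincomb_atom1 _ x1 x2 x3 x4 x5 x6)
    | constr_eq e x2; eapply (lincomb_atom2 _ x1 x2 x3 x4 x5 x6)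
    | constr_eq e x3; eapply (lincomb_atom3 _ x1 x2 x3 x4 x5 x6)
    | constr_eq e x4; eapply (lincomb_atom4 _ x1 x2 x3 x4 x5 x6)
    | constr_eq e x5; eapply (lincomb_atom5 _ x1 x2 x3 x4 x5 x6)
    | constr_eq e x6; eapply (lincomb_atom6 _ x1 x2 x3 x4 x5 x6)
    | lazymatch e with
      | vadd _ _ _ =>
          eapply lincomb_add; [reify_lincomb x1 x2 x3 x4 x5 x6 | reify_lincomb x1 x2 x3 x4 x5 x6]
      | vsub _ _ _ =>
          eapply lincomb_sub; [reify_lincomb x1 x2 x3 x4 x5 x6 | reify_lincomb x1 x2 x3 x4 x5 x6]
      | vscal _ _ _ => eapply lincomb_scal; reify_lincomb x1 x2 x3 x4 x5 x6
      | vopp _ _ => eapply lincomb_opp; reify_lincomb x1 x2 x3 x4 x5 x6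
      | vzero _ => apply (lincomb_zero _ x1 x2 x3 x4 x5 x6)
      end ]
  end.

(* [vsolve x1 ... xk] proves an identity between vector expressions in the atoms
   [x1 ... xk] by comparing coefficients; coefficient goals not closed by [ring]
   are left to the user. *)
Ltac vsolve_gen x1 x2 x3 x4 x5 x6 :=
  eapply eq_trans; [reify_lincomb x1 x2 x3 x4 x5 x6 |];
  symmetry; eapply eq_trans; [reify_lincomb x1 x2 x3 x4 x5 x6 |];
  apply lincomb_ext.

Tactic Notation "vsolve" constr(x1) :=
  vsolve_gen x1 x1 x1 x1 x1 x1; try ring.
Tactic Notation "vsolve" constr(x1) constr(x2) :=
  vsolve_gen x1 x2 x2 x2 x2 x2; try ring.
Tactic Notation "vsolve" constr(x1) constr(x2) constr(x3) :=
  vsolve_gen x1 x2 x3 x3 x3 x3; try ring.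
Tactic Notation "vsolve" constr(x1) constr(x2) constr(x3) constr(x4) :=
  vsolve_gen x1 x2 x3 x4 x4 x4; try ring.
Tactic Notation "vsolve" constr(x1) constr(x2) constr(x3) constr(x4) constr(x5) :=
  vsolve_gen x1 x2 x3 x4 x5 x5; try ring.

Section SubspaceNorm.
Context {X : Type} (S : VectSpace X) (P : X -> Prop) (HP : is_subspace S P).

Lemma subspace0 : P (vzero S). Proof. apply HP. Qed.
Lemma subspaceD x y : P x -> P y -> P (vadd S x y). Proof. apply HP. Qed.
Lemma subspaceZ a x : P x -> P (vscal S a x). Proof. apply HP. Qed.
Lemma subspaceB x y : P x -> P y -> P (vsub S x y).
Proof. intros; unfold vsub; rewrite vopp_vscal; auto using subspaceD, subspaceZ. Qed.

Context (n : X -> R) (Hn : is_norm_on S P n).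

Lemma norm_ge0 x : P x -> 0 <= n x. Proof. apply Hn. Qed.
Lemma norm_eq0 x : P x -> n x = 0 -> x = vzero S. Proof. apply Hn. Qed.
Lemma normZ a x : P x -> n (vscal S a x) = Rabs a * n x. Proof. apply Hn. Qed.
Lemma normD x y : P x -> P y -> n (vadd S x y) <= n x + n y. Proof. apply Hn. Qed.

Lemma norm0 : n (vzero S) = 0.
Proof. rewrite <- (vscal_0l S (vzero S)), normZ, Rabs_R0; [ring | apply subspace0]. Qed.

Lemma normN1 x : P x -> n (vscal S (-1) x) = n x.
Proof. intros; rewrite normZ, Rabs_left; auto; lra. Qed.

Lemma norm_subC x y : P x -> P y -> n (vsub S x y) = n (vsub S y x).
Proof.
intros; replace (vsub S y x) with (vscal S (-1) (vsub S x y)) by vsolve x y.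
rewrite normN1; auto using subspaceB.
Qed.

Lemma norm_sub_ge x y : P x -> P y -> n x <= n y + n (vsub S y x).
Proof.
intros; replace x with (vadd S y (vscal S (-1) (vsub S y x))) at 1 by vsolve x y.
rewrite <- (normN1 (vsub S y x)) by auto using subspaceB.
auto using normD, subspaceZ, subspaceB.
Qed.

End SubspaceNorm.

Lemma zorn_chain_union (T : Type) (Good : (T -> Prop) -> Prop) :
  (forall F : (T -> Prop) -> Prop, (forall A, F A -> Good A) ->
     (forall A B, F A -> F B -> (forall x, A x -> B x) \/ (forall x, B x -> A x)) ->
     Good (fun x => exists2 A, F A & A x)) ->
  exists A, Good A /\
    forall B, (forall x, A x -> B x) -> (exists x, B x /\ ~ A x) -> ~ Good B.
Proof.
intros Hchain.
destruct (@classical_sets.Zorn_bigcup T Good) as [A [GA Amax]].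
- intros F FG Ftot; apply Hchain; [exact FG |].
  intros A B FA FB; destruct (Ftot A B FA FB); [left | right]; auto.
- exists A; split; [exact GA |]; intros B AB [x [Bx nAx]] GB.
  apply (Amax B); [split; [exact AB |] | exact GB].
  intros BA; exact (nAx (BA x Bx)).
Qed.

Section HahnBanach.
Context {X : Type} (S : VectSpace X) (P : X -> Prop) (HP : is_subspace S P).
Let P0 := subspace0 S P HP.
Let PD := subspaceD S P HP.
Let PZ := subspaceZ S P HP.
Let PB := subspaceB S P HP.
#[local] Hint Resolve P0 PD PZ PB : core.

(* [Q x c] plays the role of [p x <= c] for a sublinear functional [p], which need
   not be attained as an infimum and may be unbounded below away from [0]. *)
Context (Q : X -> R -> Prop)
  (QD : forall x y c d, P x -> P y -> Q x c -> Q y d -> Q (vadd S x y) (c + d))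
  (QZ : forall x c t, P x -> Q x c -> t > 0 -> Q (vscal S t x) (t * c))
  (Qfinite : forall x, P x -> exists c, Q x c)
  (Q0 : forall c, Q (vzero S) c -> 0 <= c).

(* Graphs of linear functionals on subspaces of [P] that are dominated by [Q]. *)
Definition dominated_graph (G : X * R -> Prop) : Prop :=
  (forall x r, G (x, r) -> P x) /\
  (forall x r r', G (x, r) -> G (x, r') -> r = r') /\
  (forall x r y s, G (x, r) -> G (y, s) -> G (vadd S x y, r + s)) /\
  (forall a x r, G (x, r) -> G (vscal S a x, a * r)) /\
  (forall x r c, G (x, r) -> Q x c -> r <= c).

Lemma dominated_graph_chain_union (F : (X * R -> Prop) -> Prop) :
  (forall A, F A -> dominated_graph A) ->
  (forall A B, F A -> F B -> (forall x, A x -> B x) \/ (forall x, B x -> A x)) ->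
  dominated_graph (fun x => exists2 A, F A & A x).
Proof.
intros FG Ftot.
assert (both : forall A B p q, F A -> F B -> A p -> B q -> exists2 C, F C & C p /\ C q).
{ intros A B p q FA FB Ap Bq; destruct (Ftot A B FA FB); [exists B | exists A]; auto. }
split; [|split; [|split; [|split]]].
- intros x r [A FA Ax]; eapply (FG A FA); eauto.
- intros x r r' [A FA Ax] [B FB Bx].
  destruct (both A B _ _ FA FB Ax Bx) as [C FC [C1 C2]]; eapply (FG C FC); eauto.
- intros x r y s [A FA Ax] [B FB Bx].
  destruct (both A B _ _ FA FB Ax Bx) as [C FC [C1 C2]]; exists C; [| eapply (FG C FC)]; eauto.
- intros a x r [A FA Ax]; exists A; [| eapply (FG A FA)]; eauto.
- intros x r c [A FA Ax]; eapply (FG A FA); eauto.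
Qed.

Section Extension.
Context (M : X * R -> Prop) (HM : dominated_graph M) (M00 : M (vzero S, 0)).
Context (y : X) (Py : P y).

Lemma M_in_P x r : M (x, r) -> P x. Proof. apply HM. Qed.

Lemma extension_value : exists alpha,
  (forall x r c, M (x, r) -> Q (vsub S x y) c -> r - c <= alpha) /\
  (forall x r c, M (x, r) -> Q (vadd S x y) c -> alpha <= c - r).
Proof.
destruct HM as [_ [_ [MD [_ Mdom]]]].
assert (below : forall x1 r1 c1 x2 r2 c2, M (x1, r1) -> Q (vsub S x1 y) c1 ->
          M (x2, r2) -> Q (vadd S x2 y) c2 -> r1 - c1 <= c2 - r2).
{ intros x1 r1 c1 x2 r2 c2 M1 Q1 M2 Q2.
  assert (Q12 : Q (vadd S x1 x2) (c1 + c2)).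
  { replace (vadd S x1 x2) with (vadd S (vsub S x1 y) (vadd S x2 y)) by vsolve x1 x2 y.
    apply QD; eauto using M_in_P. }
  pose proof (Mdom _ _ _ (MD _ _ _ _ M1 M2) Q12); lra. }
set (L := fun t => exists x r c, M (x, r) /\ Q (vsub S x y) c /\ t = r - c).
destruct (Qfinite (vadd S (vzero S) y)) as [c0 Qc0]; [auto |].
destruct (Qfinite (vsub S (vzero S) y)) as [c1 Qc1]; [auto |].
destruct (completeness L) as [alpha [ub lub]].
- exists (c0 - 0); intros t (x & r & c & Mx & Qx & ->); eapply below; eauto.
- exists (0 - c1), (vzero S), 0, c1; auto.
- exists alpha; split.
  + intros x r c Mx Qx; apply ub; exists x, r, c; auto.
  + intros x2 r2 c2 M2 Q2; apply lub; intros t (x & r & c & Mx & Qx & ->); eapply below; eauto.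
Qed.

Context (alpha : R)
  (alpha_lb : forall x r c, M (x, r) -> Q (vsub S x y) c -> r - c <= alpha)
  (alpha_ub : forall x r c, M (x, r) -> Q (vadd S x y) c -> alpha <= c - r).

Lemma extension_dominated x r s c :
  M (x, r) -> Q (vadd S x (vscal S s y)) c -> r + s * alpha <= c.
Proof.
intros Mx Qc; pose proof (M_in_P _ _ Mx) as Px.
destruct HM as (_ & _ & _ & MZ & Mdom).
assert (Pz : P (vadd S x (vscal S s y))) by auto.
destruct (Rtotal_order s 0) as [sn | [-> | sp]].
- assert (Qs := QZ _ _ (/ (- s)) Pz Qc ltac:(apply Rlt_gt, Rinv_0_lt_compat; lra)).
  replace (vscal S (/ (- s)) (vadd S x (vscal S s y)))
    with (vsub S (vscal S (/ (- s)) x) y) in Qs by (vsolve x y; field; lra).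
  assert (h := alpha_lb _ _ _ (MZ (/ (- s)) _ _ Mx) Qs).
  assert (hs : - s * (/ - s * r - / - s * c) <= - s * alpha) by (apply Rmult_le_compat_l; lra).
  replace (- s * (/ - s * r - / - s * c)) with (r - c) in hs by (field; lra).
  lra.
- rewrite vscal_0l, vadd_0r in Qc; pose proof (Mdom _ _ _ Mx Qc).
  lra.
- assert (Qs := QZ _ _ (/ s) Pz Qc ltac:(apply Rlt_gt, Rinv_0_lt_compat; lra)).
  replace (vscal S (/ s) (vadd S x (vscal S s y)))
    with (vadd S (vscal S (/ s) x) y) in Qs by (vsolve x y; field; lra).
  assert (h := alpha_ub _ _ _ (MZ (/ s) _ _ Mx) Qs).
  assert (hs : s * alpha <= s * (/ s * c - / s * r)) by (apply Rmult_le_compat_l; lra).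
  replace (s * (/ s * c - / s * r)) with (c - r) in hs by (field; lra).
  lra.
Qed.

Definition extension (p : X * R) : Prop :=
  let (z, t) := p in exists x r s, M (x, r) /\ z = vadd S x (vscal S s y) /\ t = r + s * alpha.

Lemma extension_dominated_graph : ~ (exists r, M (y, r)) -> dominated_graph extension.
Proof.
intros ynew; destruct HM as [_ [Mfun [MD [MZ _]]]].
split; [|split; [|split; [|split]]].
- intros z r (x & rx & s & Mx & -> & _); simpl; eauto using M_in_P.
- intros z r r' (x & rx & s & Mx & Ez & Er) (x' & rx' & s' & Mx' & Ez' & Er').
  simpl in *; subst z r r'.
  destruct (Req_dec s s') as [<- | ne].
  + assert (x = x') as <-.
    { apply (vadd_inj_l S (vscal S s y)).
      rewrite (vadd_comm _ S _ x), (vadd_comm _ S _ x'); exact Ez'. }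
    rewrite (Mfun _ _ _ Mx Mx'); reflexivity.
  + exfalso; apply ynew; exists (/ (s - s') * (rx' + -1 * rx)).
    replace y with (vscal S (/ (s - s')) (vadd S x' (vscal S (-1) x))).
    { apply MZ, MD, MZ; auto. }
    transitivity (vscal S (/ (s - s'))
      (vsub S (vadd S x (vscal S s y)) (vadd S x (vscal S s' y)))); [rewrite Ez'; vsolve x x' y |].
    vsolve y x; field; lra.
- intros z r z' r' (x & rx & s & Mx & -> & ->) (x' & rx' & s' & Mx' & -> & ->).
  exists (vadd S x x'), (rx + rx'), (s + s'); simpl; split; [auto |].
  split; [vsolve x x' y | ring].
- intros a z r (x & rx & s & Mx & -> & ->).
  exists (vscal S a x), (a * rx), (a * s); simpl; split; [auto |].
  split; [vsolve x y | ring].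
- intros z r c (x & rx & s & Mx & -> & ->); simpl; apply extension_dominated; auto.
Qed.

End Extension.

Lemma maximal_dominated_graph_0 (M : X * R -> Prop) : dominated_graph M ->
  (forall B, (forall p, M p -> B p) -> (exists p, B p /\ ~ M p) -> ~ dominated_graph B) ->
  M (vzero S, 0).
Proof.
intros (_ & _ & _ & MZ & _) Mmax.
destruct (classic (exists p, M p)) as [[[x r] Mx] | Mempty].
- pose proof (MZ 0 x r Mx) as M0; rewrite vscal_0l, Rmult_0_l in M0; exact M0.
- exfalso; apply (Mmax (fun p => p = (vzero S, 0))).
  + intros p Mp; exfalso; eauto.
  + exists (vzero S, 0); split; [reflexivity | eauto].
  + split; [|split; [|split; [|split]]].
    * intros x r [= -> _]; auto.
    * intros x r r' [= _ ->] [= _ ->]; reflexivity.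
    * intros x r z s [= -> ->] [= -> ->]; rewrite vadd_0; f_equal; ring.
    * intros a x r [= -> ->]; rewrite vscal_0r; f_equal; ring.
    * intros x r c [= -> ->]; apply Q0.
Qed.

Lemma maximal_dominated_graph_total (M : X * R -> Prop) : dominated_graph M ->
  (forall B, (forall p, M p -> B p) -> (exists p, B p /\ ~ M p) -> ~ dominated_graph B) ->
  forall y, P y -> exists r, M (y, r).
Proof.
intros HM Mmax y Py; apply NNPP; intros ynew.
assert (M00 := maximal_dominated_graph_0 M HM Mmax).
destruct (extension_value M HM M00 y Py) as [alpha [alb aub]].
apply (Mmax (extension M y alpha)).
- intros [x r] Mx; exists x, r, 0; simpl; split; [exact Mx |].
  split; [rewrite vscal_0l, vadd_0r | ring]; reflexivity.
- exists (y, alpha); split.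
  + exists (vzero S), 0, 1; simpl; split; [exact M00 | split; [vsolve y | ring]].
  + intros My; apply ynew; eauto.
- apply extension_dominated_graph; auto.
Qed.

Theorem hahn_banach :
  exists phi, is_linear_on S P phi /\ forall x c, P x -> Q x c -> phi x <= c.
Proof.
destruct (zorn_chain_union _ dominated_graph dominated_graph_chain_union) as [M [HM Mmax]].
assert (Mtot := maximal_dominated_graph_total M HM Mmax).
destruct (choice (fun x r => P x -> M (x, r))) as [phi Hphi].
{ intros x; destruct (classic (P x)) as [Px | nPx].
  - destruct (Mtot x Px) as [r Mr]; exists r; auto.
  - exists 0; tauto. }
destruct HM as [_ [Mfun [MD [MZ Mdom]]]].
exists phi; split; [split |].
- intros x y Px Py; apply (Mfun (vadd S x y)); auto.
- intros a x Px; apply (Mfun (vscal S a x)); auto.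
- intros x c Px Qx; eapply Mdom; eauto.
Qed.

End HahnBanach.

Definition seqVS : VectSpace (nat -> R).
refine {| vzero := fun _ => 0; vadd := fun a b k => a k + b k; vopp := fun a k => - a k;
          vscal := fun t a k => t * a k |};
intros; apply functional_extensionality; intros; simpl; ring.
Defined.

Definition bounded_seq (a : nat -> R) : Prop := exists B, forall k, Rabs (a k) <= B.

Definition eventually_le (a : nat -> R) (c : R) : Prop :=
  exists N, forall k, (k >= N)%nat -> a k <= c.

Lemma bounded_seq_subspace : is_subspace seqVS bounded_seq.
Proof.
split; [|split].
- exists 0; intros; simpl; rewrite Rabs_R0; lra.
- intros a b [A hA] [B hB]; exists (A + B); intros k; simpl.
  pose proof (Rabs_triang (a k) (b k)); specialize (hA k); specialize (hB k); lra.
- intros t a [B hB]; exists (Rabs t * B); intros k; simpl; rewrite Rabs_mult.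
  apply Rmult_le_compat_l; [apply Rabs_pos | auto].
Qed.

Lemma banach_limit_exists : exists L : (nat -> R) -> R,
  is_linear_on seqVS bounded_seq L /\
  forall a c, bounded_seq a -> eventually_le a c -> L a <= c.
Proof.
apply (hahn_banach seqVS bounded_seq bounded_seq_subspace eventually_le).
- intros a b c d _ _ [N1 h1] [N2 h2]; exists (max N1 N2); intros k hk; simpl.
  assert (a k <= c) by (apply h1; lia); assert (b k <= d) by (apply h2; lia); lra.
- intros a c t _ [N h] ht; exists N; intros k hk; simpl.
  apply Rmult_le_compat_l; [lra | auto].
- intros a [B h]; exists B, 0%nat; intros k _.
  exact (Rle_trans _ _ _ (Rle_abs _) (h k)).
- intros c [N h]; exact (h N (le_n N)).
Qed.

Definition banach_limit : (nat -> R) -> R :=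
  epsilon (inhabits (fun _ => 0)) (fun L => is_linear_on seqVS bounded_seq L /\
     forall a c, bounded_seq a -> eventually_le a c -> L a <= c).

Lemma banach_limit_spec : is_linear_on seqVS bounded_seq banach_limit /\
  forall a c, bounded_seq a -> eventually_le a c -> banach_limit a <= c.
Proof. unfold banach_limit; apply epsilon_spec, banach_limit_exists. Qed.

Lemma banach_limitD a b : bounded_seq a -> bounded_seq b ->
  banach_limit (fun k => a k + b k) = banach_limit a + banach_limit b.
Proof. apply banach_limit_spec. Qed.

Lemma banach_limitZ t a : bounded_seq a ->
  banach_limit (fun k => t * a k) = t * banach_limit a.
Proof. apply banach_limit_spec. Qed.

Lemma banach_limit_le a c N : bounded_seq a ->
  (forall k, (k >= N)%nat -> a k <= c) -> banach_limit a <= c.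
Proof. intros; apply banach_limit_spec; [| exists N]; auto. Qed.

Lemma Rabs_banach_limit_le a c : (forall k, Rabs (a k) <= c) -> Rabs (banach_limit a) <= c.
Proof.
intros hc; assert (ba : bounded_seq a) by (exists c; auto).
assert (bounds : forall k, - c <= a k <= c).
{ intros k; pose proof (Rle_abs (- a k)); rewrite Rabs_Ropp in *.
  pose proof (Rle_abs (a k)); specialize (hc k); lra. }
apply Rabs_le; split.
- assert (opp_le : banach_limit (fun k => -1 * a k) <= c).
  { apply (banach_limit_le _ _ 0); [apply bounded_seq_subspace, ba |].
    intros k _; specialize (bounds k); lra. }
  rewrite banach_limitZ in opp_le; auto; lra.
- apply (banach_limit_le _ _ 0); auto; intros k _; apply bounds.
Qed.

Section ReflexiveBanachLimit.
Context {X : Type} (S : VectSpace X) (P : X -> Prop) (n : X -> R)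
  (HP : is_subspace S P) (Hn : is_norm_on S P n) (Hrefl : is_reflexive S P n).

Lemma dual_elt_bounded_seq phi (xs : nat -> X) B :
  is_dual_elt S P n phi -> (forall k, P (xs k)) -> (forall k, n (xs k) <= B) ->
  bounded_seq (fun k => phi (xs k)).
Proof.
intros [_ [M hM]] Pxs Bxs; exists (Rabs M * B); intros k.
apply (Rle_trans _ _ _ (hM _ (Pxs k))).
pose proof (norm_ge0 S P n Hn _ (Pxs k)).
apply (Rle_trans _ (Rabs M * n (xs k))).
- apply Rmult_le_compat_r; [auto | apply Rle_abs].
- apply Rmult_le_compat_l; [apply Rabs_pos | auto].
Qed.

Lemma reflexive_banach_limit_point (xs : nat -> X) B :
  (forall k, P (xs k)) -> (forall k, n (xs k) <= B) ->
  exists x, P x /\ forall phi, is_dual_elt S P n phi ->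
    phi x = banach_limit (fun k => phi (xs k)).
Proof.
intros Pxs Bxs.
(* [fbound] does not force [M >= 0]; this needs a point of positive norm. *)
destruct (classic (exists k, n (xs k) > 0)) as [[k0 hk0] | xs0].
- destruct (Hrefl (fun phi => banach_limit (fun k => phi (xs k)))) as [x [Px hx]].
  + split; [|split; [|split]].
    * intros phi psi _ h; f_equal; apply functional_extensionality; intros k; auto.
    * intros phi psi h1 h2; apply banach_limitD; eapply dual_elt_bounded_seq; eauto.
    * intros a phi h; apply banach_limitZ; eapply dual_elt_bounded_seq; eauto.
    * exists B; intros phi M _ hM.
      assert (M0 : 0 <= M).
      { apply (Rmult_le_reg_r (n (xs k0))); [lra |].
        rewrite Rmult_0_l; apply (Rle_trans _ _ _ (Rabs_pos _) (hM _ (Pxs k0))). }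
      rewrite Rmult_comm; apply Rabs_banach_limit_le; intros k.
      apply (Rle_trans _ _ _ (hM _ (Pxs k))), Rmult_le_compat_l; auto.
  + exists x; split; [exact Px |]; intros phi h; symmetry; auto.
- exists (vzero S); split; [apply HP |]; intros phi [[_ phiZ] _].
  assert (phi0 : phi (vzero S) = 0).
  { rewrite <- (vscal_0l S (vzero S)), phiZ; [ring | apply HP]. }
  assert (xs_eq0 : forall k, xs k = vzero S).
  { intros k; apply (norm_eq0 S P n Hn); auto.
    apply Rle_antisym; [apply Rnot_lt_le; eauto | apply Hn; auto]. }
  replace (fun k => phi (xs k)) with (fun _ : nat => 0 * 0).
  + rewrite (banach_limitZ 0 (fun _ => 0)); [lra |].
    exists 0; intros; rewrite Rabs_R0; lra.
  + apply functional_extensionality; intros k; rewrite xs_eq0, phi0; ring.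
Qed.

End ReflexiveBanachLimit.

Lemma inv_succ_pos k : 0 < / (INR k + 1).
Proof. apply Rinv_0_lt_compat; pose proof (pos_INR k); lra. Qed.

Lemma inv_succ_le N k : (k >= N)%nat -> / (INR k + 1) <= / (INR N + 1).
Proof.
intros h; apply Rinv_le_contravar; [pose proof (pos_INR N); lra |].
apply le_INR in h; lra.
Qed.

Lemma inv_succ_eventually_lt eps : eps > 0 ->
  exists N, forall k, (k >= N)%nat -> / (INR k + 1) < eps.
Proof.
intros he; destruct (archimed_cor1 eps he) as [N [hN Npos]].
exists N; intros k hk; apply (Rle_lt_trans _ (/ INR N)); [| exact hN].
apply Rinv_le_contravar; [apply lt_0_INR; lia |].
apply le_INR in hk; lra.
Qed.

Lemma le_of_le_add_inv_succ x m : (forall k, x <= m + / (INR k + 1)) -> x <= m.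
Proof.
intros h; apply Rnot_lt_le; intros hl.
destruct (inv_succ_eventually_lt (x - m)) as [N hN]; [lra |].
specialize (hN N (le_n N)); specialize (h N); lra.
Qed.

Lemma Un_cv0_inv_succ (a : nat -> R) : (forall i, 0 <= a i < / (INR i + 1)) -> Un_cv a 0.
Proof.
intros h eps he; destruct (inv_succ_eventually_lt eps he) as [N hN].
exists N; intros k hk; unfold R_dist.
rewrite Rminus_0_r, Rabs_right by (specialize (h k); lra).
specialize (h k); specialize (hN k hk); lra.
Qed.

Lemma Un_cv0_le (a b : nat -> R) : (forall i, 0 <= a i <= b i) -> Un_cv b 0 -> Un_cv a 0.
Proof.
intros hab cvb eps he; destruct (cvb eps he) as [N hN]; exists N; intros k hk.
specialize (hN k hk); specialize (hab k); unfold R_dist in *; rewrite Rminus_0_r in *.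
rewrite Rabs_right in * by lra; lra.
Qed.

Lemma Un_cv_const_eq (a : R) : Un_cv (fun _ => a) 0 -> a = 0.
Proof.
intros cva; apply NNPP; intros ne.
destruct (cva (Rabs a)) as [N hN]; [apply Rabs_pos_lt, ne |].
specialize (hN N (le_n N)); unfold R_dist in hN; rewrite Rminus_0_r in hN; lra.
Qed.

Section NormedSpace.
Context {X : Type} (S : VectSpace X) (P : X -> Prop) (HP : is_subspace S P)
  (n : X -> R) (Hn : is_norm_on S P n).
Let PD := subspaceD S P HP.
Let PZ := subspaceZ S P HP.
Let PB := subspaceB S P HP.
#[local] Hint Resolve PD PZ PB : core.

Definition is_closed (C : X -> Prop) : Prop :=
  forall zs z, (forall i, C (zs i)) -> P z ->
    Un_cv (fun i => n (vsub S (zs i) z)) 0 -> C z.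

Definition is_convex (C : X -> Prop) : Prop :=
  forall u v t, C u -> C v -> 0 <= t <= 1 ->
    C (vadd S (vscal S t u) (vscal S (1 - t) v)).

Lemma Un_cv_norm_subC xs x : (forall i, P (xs i)) -> P x ->
  Un_cv (fun i => n (vsub S (xs i) x)) 0 -> Un_cv (fun i => n (vsub S x (xs i))) 0.
Proof.
intros Pxs Px cv eps he; destruct (cv eps he) as [N hN]; exists N; intros k hk.
rewrite (norm_subC S P HP n Hn); auto.
Qed.

Lemma closed_singleton w : P w -> is_closed (fun v => v = w).
Proof.
intros Pw zs z zs_w Pz cv.
assert (d0 : n (vsub S w z) = 0).
{ apply Un_cv_const_eq; apply (Un_cv_ext (fun i => n (vsub S (zs i) z))); [| exact cv].
  intros i; rewrite zs_w; reflexivity. }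
apply (norm_eq0 S P n Hn) in d0; auto.
transitivity (vsub S w (vsub S w z)); [vsolve z w | rewrite d0; vsolve w].
Qed.

Lemma closed_dist_pos (C : X -> Prop) z : (forall s, C s -> P s) -> is_closed C ->
  P z -> ~ C z -> exists d, d > 0 /\ forall s, C s -> d <= n (vsub S s z).
Proof.
intros CP Cclosed Pz nCz; apply NNPP; intros nodist.
destruct (choice (fun (i : nat) s => C s /\ n (vsub S s z) < / (INR i + 1))) as [zs hzs].
{ intros i; apply NNPP; intros far; apply nodist.
  exists (/ (INR i + 1)); split; [apply inv_succ_pos |].
  intros s Cs; apply Rnot_lt_le; intros close; apply far; eauto. }
apply nCz, (Cclosed zs); auto; [intros i; apply hzs |].
apply Un_cv0_inv_succ; intros i; split; [| apply hzs].
apply (norm_ge0 S P n Hn), PB; [apply CP, hzs | exact Pz].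
Qed.

Section Separation.
Context (C : X -> Prop) (z : X) (d : R) (CP : forall s, C s -> P s) (s0 : X) (Cs0 : C s0)
  (Cconv : is_convex C) (Pz : P z) (Cdist : forall s, C s -> d <= n (vsub S s z)).

(* [sep_gauge w c] means [p w <= c] for the sublinear functional
   [p w = inf_(t >= 0, s in C) n (w - t (s - z)) - t d], which satisfies [p <= n]
   and [p (s - z) <= - d] on [C]. *)
Definition sep_gauge (w : X) (c : R) : Prop :=
  P w /\ exists t s, 0 <= t /\ C s /\ n (vsub S w (vscal S t (vsub S s z))) - t * d <= c.

Lemma sep_gaugeD w1 w2 c1 c2 : P w1 -> P w2 ->
  sep_gauge w1 c1 -> sep_gauge w2 c2 -> sep_gauge (vadd S w1 w2) (c1 + c2).
Proof.
intros P1 P2 [_ (t1 & s1 & t1p & C1 & h1)] [_ (t2 & s2 & t2p & C2 & h2)].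
split; [auto |].
set (r1 := vsub S w1 (vscal S t1 (vsub S s1 z))) in *.
set (r2 := vsub S w2 (vscal S t2 (vsub S s2 z))) in *.
assert (tri := normD S P n Hn r1 r2 ltac:(unfold r1; auto) ltac:(unfold r2; auto)).
destruct (Req_dec (t1 + t2) 0) as [t0 | tpos].
- assert (t1 = 0) as -> by lra; assert (t2 = 0) as -> by lra.
  exists 0, s1; split; [lra | split; [exact C1 |]].
  replace (vsub S (vadd S w1 w2) (vscal S 0 (vsub S s1 z))) with (vadd S r1 r2)
    by (unfold r1, r2; vsolve w1 w2 s1 s2 z).
  lra.
- set (u := t1 / (t1 + t2)).
  exists (t1 + t2), (vadd S (vscal S u s1) (vscal S (1 - u) s2)).
  split; [lra | split].
  + apply Cconv; auto; unfold u; split.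
    * apply Rmult_le_pos; [lra | left; apply Rinv_0_lt_compat; lra].
    * apply (Rmult_le_reg_r (t1 + t2)); [lra |].
      unfold Rdiv; rewrite Rmult_assoc, Rinv_l; lra.
  + replace (vsub S (vadd S w1 w2)
        (vscal S (t1 + t2) (vsub S (vadd S (vscal S u s1) (vscal S (1 - u) s2)) z)))
      with (vadd S r1 r2) by (unfold r1, r2, u; vsolve w1 w2 s1 s2 z; field; lra).
    lra.
Qed.

Lemma sep_gaugeZ w c t : P w -> sep_gauge w c -> t > 0 -> sep_gauge (vscal S t w) (t * c).
Proof.
intros Pw [_ (t1 & s1 & t1p & C1 & h1)] tp; split; [auto |].
exists (t * t1), s1; split; [apply Rmult_le_pos; lra | split; [exact C1 |]].
replace (vsub S (vscal S t w) (vscal S (t * t1) (vsub S s1 z)))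
  with (vscal S t (vsub S w (vscal S t1 (vsub S s1 z)))) by vsolve w s1 z.
rewrite (normZ S P n Hn), Rabs_right by (auto; lra).
assert (t * (n (vsub S w (vscal S t1 (vsub S s1 z))) - t1 * d) <= t * c)
  by (apply Rmult_le_compat_l; lra).
lra.
Qed.

Lemma sep_gauge_norm w : P w -> sep_gauge w (n w).
Proof.
intros Pw; split; [exact Pw |]; exists 0, s0; split; [lra | split; [exact Cs0 |]].
replace (vsub S w (vscal S 0 (vsub S s0 z))) with w by vsolve w s0 z; lra.
Qed.

Lemma sep_gauge0 c : sep_gauge (vzero S) c -> 0 <= c.
Proof.
intros [_ (t & s & tp & Cs & h)].
replace (vsub S (vzero S) (vscal S t (vsub S s z))) with (vscal S (- t) (vsub S s z)) in h
  by vsolve s z.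
rewrite (normZ S P n Hn), Rabs_Ropp, Rabs_right in h by (auto; lra).
assert (t * d <= t * n (vsub S s z)) by (apply Rmult_le_compat_l; auto).
lra.
Qed.

Lemma convex_separation : exists phi, is_linear_on S P phi /\
  (forall x, P x -> Rabs (phi x) <= n x) /\ forall s, C s -> phi s <= phi z - d.
Proof.
destruct (hahn_banach S P HP sep_gauge sep_gaugeD sep_gaugeZ
           (fun w Pw => ex_intro _ _ (sep_gauge_norm w Pw)) sep_gauge0)
  as [phi [[phiD phiZ] phi_le]].
exists phi; split; [split; auto | split].
- intros x Px; apply Rabs_le; split.
  + assert (h := phi_le _ _ (PZ (-1) x Px) (sep_gauge_norm _ (PZ (-1) x Px))).
    rewrite phiZ, (normN1 S P n Hn) in h by auto; lra.
  + apply phi_le, sep_gauge_norm; auto.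
- intros s Cs.
  assert (h : phi (vsub S s z) <= - d).
  { apply phi_le; [auto | split; [auto |]].
    exists 1, s; split; [lra | split; [exact Cs |]].
    replace (vsub S (vsub S s z) (vscal S 1 (vsub S s z))) with (vzero S) by vsolve s z.
    rewrite (norm0 S P HP n Hn); lra. }
  unfold vsub in h; rewrite vopp_vscal, phiD, phiZ in h by auto; lra.
Qed.

End Separation.

(* Mazur's lemma, with weak convergence replaced by convergence along a Banach limit. *)
Lemma closed_convex_banach_limit (C : X -> Prop) (zs : nat -> X) z N B :
  (forall s, C s -> P s) -> is_convex C -> is_closed C ->
  (forall k, P (zs k)) -> (forall k, (k >= N)%nat -> C (zs k)) ->
  (forall k, n (zs k) <= B) -> P z ->
  (forall phi, is_linear_on S P phi -> (forall x, P x -> Rabs (phi x) <= n x) ->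
     phi z = banach_limit (fun k => phi (zs k))) ->
  C z.
Proof.
intros CP Cconv Cclosed Pzs Czs Bzs Pz hz; apply NNPP; intros nCz.
destruct (closed_dist_pos C z CP Cclosed Pz nCz) as [d [dpos Cdist]].
destruct (convex_separation C z d CP (zs N) (Czs N (le_n N)) Cconv Pz Cdist)
  as [phi [phi_lin [phi_bnd phi_sep]]].
assert (bounded : bounded_seq (fun k => phi (zs k))).
{ exists B; intros k; apply (Rle_trans _ _ _ (phi_bnd _ (Pzs k)) (Bzs k)). }
assert (lim_le : banach_limit (fun k => phi (zs k)) <= phi z - d)
  by (apply (banach_limit_le _ _ N); auto).
rewrite <- hz in lim_le; auto; lra.
Qed.

End NormedSpace.

Lemma minimizing_sequence {T : Type} (A : T -> Prop) (f : T -> R) :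
  (exists a, A a) -> (forall a, A a -> 0 <= f a) ->
  exists m (ps : nat -> T), (forall a, A a -> m <= f a) /\
    forall k, A (ps k) /\ f (ps k) < m + / (INR k + 1).
Proof.
intros [a0 Aa0] f_ge0.
destruct (completeness (fun t => exists a, A a /\ t = - f a)) as [L [L_ub L_lub]].
- exists 0; intros t [a [Aa ->]]; specialize (f_ge0 a Aa); lra.
- exists (- f a0), a0; auto.
- assert (m_lb : forall a, A a -> - L <= f a).
  { intros a Aa; assert (h := L_ub (- f a) ltac:(exists a; auto)); lra. }
  destruct (choice (fun (k : nat) a => A a /\ f a < - L + / (INR k + 1))) as [ps hps].
  { intros k; apply NNPP; intros none.
    assert (L <= L - / (INR k + 1)); [| pose proof (inv_succ_pos k); lra].
    apply L_lub; intros t [a [Aa ->]]; apply Rnot_lt_le; intros lt.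
    apply none; exists a; split; [exact Aa | lra]. }
  exists (- L), ps; auto.
Qed.

Definition prodVS {A B} (SA : VectSpace A) (SB : VectSpace B) : VectSpace (A * B).
refine {| vzero := (vzero SA, vzero SB);
          vadd := fun p q => (vadd SA (fst p) (fst q), vadd SB (snd p) (snd q));
          vopp := fun p => (vopp SA (fst p), vopp SB (snd p));
          vscal := fun t p => (vscal SA t (fst p), vscal SB t (snd p)) |};
intros; repeat match goal with p : (_ * _)%type |- _ => destruct p end; simpl; f_equal;
  first [ apply vadd_assoc | apply vadd_comm | apply vadd_0 | apply vadd_opp
        | apply vscal_assoc | apply vscal_1 | apply vscal_addr | apply vscal_addl ].
Defined.

Section Product.
Context {X Y : Type} (SX : VectSpace X) (PX : X -> Prop) (nX : X -> R)
  (SY : VectSpace Y) (PY : Y -> Prop) (nY : Y -> R).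

Definition prodP (p : X * Y) : Prop := PX (fst p) /\ PY (snd p).
Definition prod_norm (p : X * Y) : R := nX (fst p) + nY (snd p).

Context (HPX : is_subspace SX PX) (HnX : is_norm_on SX PX nX)
  (HPY : is_subspace SY PY) (HnY : is_norm_on SY PY nY).

Lemma prod_subspace : is_subspace (prodVS SX SY) prodP.
Proof.
unfold prodP; split; [|split]; simpl.
- split; apply subspace0; auto.
- intros [a b] [c e] [] []; split; apply subspaceD; auto.
- intros t [a b] []; split; apply subspaceZ; auto.
Qed.

Lemma prod_norm_on : is_norm_on (prodVS SX SY) prodP prod_norm.
Proof.
unfold prod_norm; split; [|split; [|split]].
- intros [a b] [Pa Pb]; simpl.
  pose proof (norm_ge0 SX PX nX HnX a Pa); pose proof (norm_ge0 SY PY nY HnY b Pb); lra.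
- intros [a b] [Pa Pb] h; simpl in *.
  pose proof (norm_ge0 SX PX nX HnX a Pa); pose proof (norm_ge0 SY PY nY HnY b Pb).
  f_equal; [apply (norm_eq0 SX PX nX HnX) | apply (norm_eq0 SY PY nY HnY)]; auto; lra.
- intros t [a b] [Pa Pb]; simpl.
  rewrite (normZ SX PX nX HnX), (normZ SY PY nY HnY); auto; ring.
- intros [a b] [c e] [Pa Pb] [Pc Pe]; simpl.
  pose proof (normD SX PX nX HnX a c Pa Pc); pose proof (normD SY PY nY HnY b e Pb Pe); lra.
Qed.

Lemma prod_banach_limit_point (zs : nat -> X * Y) BX BY :
  is_reflexive SX PX nX -> is_reflexive SY PY nY ->
  (forall k, prodP (zs k)) -> (forall k, nX (fst (zs k)) <= BX) ->
  (forall k, nY (snd (zs k)) <= BY) ->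
  exists z, prodP z /\ forall Phi, is_linear_on (prodVS SX SY) prodP Phi ->
    (forall p, prodP p -> Rabs (Phi p) <= prod_norm p) ->
    Phi z = banach_limit (fun k => Phi (zs k)).
Proof.
intros HXr HYr Pzs BXzs BYzs.
destruct (reflexive_banach_limit_point SX PX nX HPX HnX HXr (fun k => fst (zs k)) BX)
  as [x [Px hx]]; [apply Pzs | exact BXzs |].
destruct (reflexive_banach_limit_point SY PY nY HPY HnY HYr (fun k => snd (zs k)) BY)
  as [y [Py hy]]; [apply Pzs | exact BYzs |].
exists (x, y); split; [split; auto |]; intros Phi [PhiD PhiZ] Phi_bnd.
set (phi := fun a => Phi (a, vzero SY)); set (psi := fun b => Phi (vzero SX, b)).
assert (P0X := subspace0 SX PX HPX); assert (P0Y := subspace0 SY PY HPY).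
assert (Phi_split : forall p, prodP p -> Phi p = phi (fst p) + psi (snd p)).
{ intros [a b] [Pa Pb]; unfold phi, psi; simpl; rewrite <- PhiD by (split; auto).
  simpl; rewrite vadd_0, vadd_0r; reflexivity. }
assert (dual_phi : is_dual_elt SX PX nX phi).
{ split; [split | exists 1].
  - intros a c Pa Pc; unfold phi; rewrite <- PhiD by (split; auto).
    simpl; rewrite vadd_0; reflexivity.
  - intros t a Pa; unfold phi; rewrite <- PhiZ by (split; auto).
    simpl; rewrite vscal_0r; reflexivity.
  - intros a Pa; unfold phi; apply (Rle_trans _ _ _ (Phi_bnd (a, vzero SY) (conj Pa P0Y))).
    unfold prod_norm; simpl; rewrite (norm0 SY PY HPY nY HnY); lra. }
assert (dual_psi : is_dual_elt SY PY nY psi).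
{ split; [split | exists 1].
  - intros b c Pb Pc; unfold psi; rewrite <- PhiD by (split; auto).
    simpl; rewrite vadd_0; reflexivity.
  - intros t b Pb; unfold psi; rewrite <- PhiZ by (split; auto).
    simpl; rewrite vscal_0r; reflexivity.
  - intros b Pb; unfold psi; apply (Rle_trans _ _ _ (Phi_bnd (vzero SX, b) (conj P0X Pb))).
    unfold prod_norm; simpl; rewrite (norm0 SX PX HPX nX HnX); lra. }
rewrite Phi_split by (split; auto); simpl; rewrite hx, hy by auto.
rewrite <- banach_limitD by (eapply dual_elt_bounded_seq; eauto; intros k; apply Pzs).
f_equal; apply functional_extensionality; intros k; symmetry; apply Phi_split, Pzs.
Qed.

Lemma prod_cv_components zs z : (forall i, prodP (zs i)) -> prodP z ->
  Un_cv (fun i => prod_norm (vsub (prodVS SX SY) (zs i) z)) 0 ->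
  Un_cv (fun i => nX (vsub SX (fst (zs i)) (fst z))) 0 /\
  Un_cv (fun i => nY (vsub SY (snd (zs i)) (snd z))) 0.
Proof.
intros Pzs Pz cv.
assert (ge0 : forall i, 0 <= nX (vsub SX (fst (zs i)) (fst z)) /\
                        0 <= nY (vsub SY (snd (zs i)) (snd z))).
{ intros i; destruct (Pzs i), Pz; split.
  - apply (norm_ge0 SX PX nX HnX), (subspaceB SX PX HPX); auto.
  - apply (norm_ge0 SY PY nY HnY), (subspaceB SY PY HPY); auto. }
assert (norm_split : forall i, prod_norm (vsub (prodVS SX SY) (zs i) z) =
  nX (vsub SX (fst (zs i)) (fst z)) + nY (vsub SY (snd (zs i)) (snd z))) by reflexivity.
split; refine (Un_cv0_le _ _ _ cv); intros i; rewrite norm_split; specialize (ge0 i); lra.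
Qed.

Lemma sublevel_snd_convex (Ss : X * Y -> Prop) c :
  (forall p, Ss p -> prodP p) -> is_convex (prodVS SX SY) Ss ->
  is_convex (prodVS SX SY) (fun p => Ss p /\ nY (snd p) <= c).
Proof.
intros SsP Sconv p q t [Sp hp] [Sq hq] ht; split; [apply Sconv; auto |]; simpl.
assert (PYp := proj2 (SsP p Sp)); assert (PYq := proj2 (SsP q Sq)).
apply (Rle_trans _ _ _ (normD SY PY nY HnY _ _ (subspaceZ SY PY HPY t _ PYp)
                                                (subspaceZ SY PY HPY (1 - t) _ PYq))).
rewrite !(normZ SY PY nY HnY), !Rabs_right by (auto; lra).
assert (t * nY (snd p) <= t * c) by (apply Rmult_le_compat_l; lra).
assert ((1 - t) * nY (snd q) <= (1 - t) * c) by (apply Rmult_le_compat_l; lra).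
lra.
Qed.

Lemma sublevel_snd_closed (Ss : X * Y -> Prop) c :
  (forall p, Ss p -> prodP p) -> is_closed (prodVS SX SY) prodP prod_norm Ss ->
  is_closed (prodVS SX SY) prodP prod_norm (fun p => Ss p /\ nY (snd p) <= c).
Proof.
intros SsP Sclosed ps p hps Pp cv; split; [apply (Sclosed ps); auto; apply hps |].
assert (PYps : forall i, PY (snd (ps i))) by (intros i; apply SsP, hps).
apply Rnot_lt_le; intros gt.
destruct (cv (nY (snd p) - c)) as [N hN]; [lra |].
specialize (hN N (le_n N)); unfold R_dist in hN; rewrite Rminus_0_r in hN.
assert (close : nX (vsub SX (fst (ps N)) (fst p)) + nY (vsub SY (snd (ps N)) (snd p))
                < nY (snd p) - c) by exact (Rle_lt_trans _ _ _ (Rle_abs _) hN).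
pose proof (norm_ge0 SX PX nX HnX (vsub SX (fst (ps N)) (fst p))
              (subspaceB SX PX HPX _ _ (proj1 (SsP _ (proj1 (hps N)))) (proj1 Pp))).
pose proof (norm_sub_ge SY PY HPY nY HnY (snd p) (snd (ps N)) (proj2 Pp) (PYps N)).
pose proof (proj2 (hps N)); lra.
Qed.

Theorem norm_snd_min_attained (Ss : X * Y -> Prop) :
  is_reflexive SX PX nX -> is_reflexive SY PY nY ->
  (forall p, Ss p -> prodP p) -> (exists p, Ss p) ->
  is_convex (prodVS SX SY) Ss -> is_closed (prodVS SX SY) prodP prod_norm Ss ->
  (forall r, exists B, forall p, Ss p -> nY (snd p) <= r -> nX (fst p) <= B) ->
  exists p, Ss p /\ forall q, Ss q -> nY (snd p) <= nY (snd q).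
Proof.
intros HXr HYr SsP Sne Sconv Sclosed Scoerc.
destruct (minimizing_sequence Ss (fun p => nY (snd p)) Sne) as (m & ps & m_lb & hps).
{ intros p Sp; apply (norm_ge0 SY PY nY HnY), SsP, Sp. }
assert (ps_le : forall N k, (k >= N)%nat -> nY (snd (ps k)) <= m + / (INR N + 1)).
{ intros N k hk; pose proof (inv_succ_le N k hk); pose proof (proj2 (hps k)); lra. }
assert (ps_le1 : forall k, nY (snd (ps k)) <= m + 1).
{ intros k; pose proof (ps_le 0%nat k (Nat.le_0_l k)); simpl in *; lra. }
destruct (Scoerc (m + 1)) as [B hB].
assert (Pps : forall k, prodP (ps k)) by (intros k; apply SsP, hps).
destruct (prod_banach_limit_point ps B (m + 1) HXr HYr Pps) as [p [Pp hp]]; auto.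
{ intros k; apply hB; [apply hps | apply ps_le1]. }
assert (p_sub : forall N, Ss p /\ nY (snd p) <= m + / (INR N + 1)).
{ intros N.
  apply (closed_convex_banach_limit (prodVS SX SY) prodP prod_subspace prod_norm prod_norm_on
           (fun q => Ss q /\ nY (snd q) <= m + / (INR N + 1)) ps p N (B + (m + 1))); auto.
  - intros q [Sq _]; auto.
  - apply sublevel_snd_convex; auto.
  - apply sublevel_snd_closed; auto.
  - intros k hk; split; [apply hps | apply ps_le, hk].
  - intros k; unfold prod_norm; pose proof (hB _ (proj1 (hps k)) (ps_le1 k));
      pose proof (ps_le1 k); lra. }
exists p; split; [apply (p_sub 0%nat) |].
intros q Sq; specialize (m_lb q Sq); simpl in m_lb.
assert (nY (snd p) <= m) by (apply le_of_le_add_inv_succ; intros k; apply p_sub).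
lra.
Qed.

End Product.

Lemma strictly_convex_midpoint_eq {X : Type} (S : VectSpace X) (P : X -> Prop) (n : X -> R) :
  is_subspace S P -> is_norm_on S P n -> is_strictly_convex S P n ->
  forall x y a, P x -> P y -> n x = a -> n y = a ->
  a <= n (vscal S (/ 2) (vadd S x y)) -> x = y.
Proof.
intros HP Hn Hsc x y a Px Py nx ny a_le; apply NNPP; intros xy.
assert (a0 : 0 <= a) by (rewrite <- nx; apply (norm_ge0 S P n Hn), Px).
destruct (Req_dec a 0) as [-> | ne].
- apply xy; rewrite (norm_eq0 S P n Hn x), (norm_eq0 S P n Hn y); auto.
- assert (ainv : 0 < / a) by (apply Rinv_0_lt_compat; lra).
  assert (unit : forall v, P v -> n v = a -> n (vscal S (/ a) v) = 1).
  { intros v Pv nv; rewrite (normZ S P n Hn), nv, Rabs_right by (auto; lra); field; lra. }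
  assert (mid := Hsc (vscal S (/ a) x) (vscal S (/ a) y)
                   ltac:(apply HP; auto) ltac:(apply HP; auto) (unit x Px nx) (unit y Py ny)).
  replace (vscal S (/ 2) (vadd S (vscal S (/ a) x) (vscal S (/ a) y)))
    with (vscal S (/ a) (vscal S (/ 2) (vadd S x y))) in mid by vsolve x y.
  assert (Pmid : P (vscal S (/ 2) (vadd S x y))) by (apply HP, HP; auto).
  rewrite (normZ S P n Hn), Rabs_right in mid by (auto; lra).
  apply Rmult_le_compat_l with (r := / a) in a_le; [| lra].
  rewrite Rinv_l in a_le by lra.
  enough (vscal S (/ a) x <> vscal S (/ a) y) by (specialize (mid H); lra).
  intros e; apply xy.
  transitivity (vscal S a (vscal S (/ a) x)); [vsolve x; field; lra |].
  rewrite e; vsolve y; field; lra.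
Qed.

Section GradientSpaceTheory.
Context (U : GradientSpace).
Notation V := (VS U).
Notation W := (WS U).

Lemma Vsubspace : is_subspace V (Vp U). Proof. apply (GS1 U). Qed.
Lemma Wsubspace : is_subspace W (Wp U). Proof. apply (GS2 U). Qed.
Lemma Vnorm : is_norm_on V (Vp U) (nV U). Proof. apply (GS1 U). Qed.
Lemma Wnorm : is_norm_on W (Wp U) (nW U). Proof. apply (GS2 U). Qed.

Let VD := subspaceD V (Vp U) Vsubspace.
Let VZ := subspaceZ V (Vp U) Vsubspace.
Let VB := subspaceB V (Vp U) Vsubspace.
Let WD := subspaceD W (Wp U) Wsubspace.
Let WZ := subspaceZ W (Wp U) Wsubspace.
#[local] Hint Resolve VD VZ VB WD WZ : core.

Lemma Rel_convex_comb v1 g1 v2 g2 t : Rel U v1 g1 -> Rel U v2 g2 -> 0 <= t <= 1 ->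
  Rel U (vadd V (vscal V t v1) (vscal V (1 - t) v2))
        (vadd W (vscal W t g1) (vscal W (1 - t) g2)).
Proof.
intros R1 R2 ht; destruct (Req_dec t 0) as [-> | t0]; [| destruct (Req_dec t 1) as [-> | t1]].
- replace (vadd V (vscal V 0 v1) (vscal V (1 - 0) v2)) with v2 by vsolve v1 v2.
  replace (vadd W (vscal W 0 g1) (vscal W (1 - 0) g2)) with g2 by vsolve g1 g2.
  exact R2.
- replace (vadd V (vscal V 1 v1) (vscal V (1 - 1) v2)) with v1 by vsolve v1 v2.
  replace (vadd W (vscal W 1 g1) (vscal W (1 - 1) g2)) with g1 by vsolve g1 g2.
  exact R1.
- apply G1; apply G2; auto; lra.
Qed.

Definition gradient_pairs (K : Vt U -> Prop) (p : Vt U * Wt U) : Prop :=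
  K (fst p) /\ Wp U (snd p) /\ Rel U (fst p) (snd p).

Lemma gradient_pairs_convex K : is_convex V K -> is_convex (prodVS V W) (gradient_pairs K).
Proof.
intros Kconv [v1 g1] [v2 g2] t (K1 & P1 & R1) (K2 & P2 & R2) ht; unfold gradient_pairs; simpl.
split; [apply Kconv; auto | split; [auto | apply Rel_convex_comb; auto]].
Qed.

Lemma gradient_pairs_closed K : (forall v, K v -> Vp U v) -> is_closed V (Vp U) (nV U) K ->
  is_closed (prodVS V W) (prodP (Vp U) (Wp U)) (prod_norm (nV U) (nW U)) (gradient_pairs K).
Proof.
intros KP Kclosed ps [v g] hps [Pv Pg] cv.
assert (Pps : forall i, prodP (Vp U) (Wp U) (ps i))
  by (intros i; destruct (hps i) as (? & ? & ?); split; auto).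
destruct (prod_cv_components V (Vp U) (nV U) W (Wp U) (nW U) Vsubspace Vnorm Wsubspace Wnorm
            ps (v, g) Pps (conj Pv Pg) cv) as [cvV cvW]; simpl in cvV, cvW.
assert (Pfst : forall i, Vp U (fst (ps i))) by (intros i; apply Pps).
assert (Psnd : forall i, Wp U (snd (ps i))) by (intros i; apply Pps).
split; [apply (Kclosed (fun i => fst (ps i))); auto; intros i; apply hps |].
split; [exact Pg |]; simpl.
apply (GS4 U v g (fun i => fst (ps i)) (fun i => snd (ps i))); auto; [intros i; apply hps | |].
- exact (Un_cv_norm_subC V (Vp U) Vsubspace (nV U) Vnorm _ _ Pfst Pv cvV).
- exact (Un_cv_norm_subC W (Wp U) Wsubspace (nW U) Wnorm _ _ Psnd Pg cvW).
Qed.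

Lemma gradient_pairs_min_exists K : (forall v, K v -> Vp U v) ->
  (exists v g, K v /\ Wp U g /\ Rel U v g) ->
  is_convex V K -> is_closed V (Vp U) (nV U) K ->
  (forall r, exists B, forall v g, K v -> Wp U g -> Rel U v g -> nW U g <= r -> nV U v <= B) ->
  exists v g, K v /\ Wp U g /\ Rel U v g /\
    forall v' g', K v' -> Wp U g' -> Rel U v' g' -> nW U g <= nW U g'.
Proof.
intros KP (v0 & g0 & K0 & P0 & R0) Kconv Kclosed Kcoerc.
destruct (norm_snd_min_attained V (Vp U) (nV U) W (Wp U) (nW U)
            Vsubspace Vnorm Wsubspace Wnorm (gradient_pairs K)
            (proj2 (GS1 U)) (proj1 (proj2 (GS2 U))))
  as [[v g] [(Kv & Pg & Rvg) vg_min]].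
- intros p (Kp & Pp & _); split; auto.
- exists (v0, g0); split; auto.
- apply gradient_pairs_convex, Kconv.
- apply gradient_pairs_closed; auto.
- intros r; destruct (Kcoerc r) as [B hB]; exists B.
  intros p (Kp & Pp & Rp); apply hB; auto.
- exists v, g; do 3 (split; [assumption |]).
  intros v' g' Kv' Pg' Rv'g'; apply (vg_min (v', g')); split; auto.
Qed.

Lemma min_grad_exists w : Sob U w -> exists gw, is_min_grad U w gw.
Proof.
intros [Pw [g0 [Pg0 R0]]].
destruct (gradient_pairs_min_exists (fun v => v = w))
  as (v & g & -> & Pg & Rwg & g_min).
- intros v ->; exact Pw.
- exists w, g0; auto.
- intros v1 v2 t -> -> _; vsolve w.
- apply closed_singleton; [exact Vsubspace | exact Vnorm | exact Pw].
- intros r; exists (nV U w); intros v g -> _ _ _; lra.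
- exists g; split; [exact Pg | split; [exact Rwg |]].
  intros g' Pg' Rwg'; apply (g_min w); auto.
Qed.

Lemma Sob_add u v : Sob U u -> Sob U v -> Sob U (vadd V u v).
Proof. intros [Pu [gu [Pgu Ru]]] [Pv [gv [Pgv Rv]]]; split; [auto | exists (vadd W gu gv)].
split; [auto | apply G1; auto].
Qed.

Lemma Sob_convex : is_convex V (Sob U).
Proof.
intros u v t [Pu [gu [Pgu Ru]]] [Pv [gv [Pgv Rv]]] ht; split; [auto |].
exists (vadd W (vscal W t gu) (vscal W (1 - t) gv)); split; [auto | apply Rel_convex_comb; auto].
Qed.

Section Dirichlet.
Context (K0 : Vt U -> Prop) (f : Vt U).

Lemma Kshift_convex : is_convex_set U K0 -> is_convex V (Kshift U K0 f).
Proof.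
intros K0conv v1 v2 t [S1 K1] [S2 K2] ht; split; [apply Sob_convex; auto |].
replace (vsub V (vadd V (vscal V t v1) (vscal V (1 - t) v2)) f)
  with (vadd V (vscal V t (vsub V v1 f)) (vscal V (1 - t) (vsub V v2 f))) by vsolve v1 v2 f.
apply K0conv; auto.
Qed.

Lemma Kshift_closed : (forall u, K0 u -> Sob U u) -> is_V_closed U K0 -> Sob U f ->
  is_closed V (Vp U) (nV U) (Kshift U K0 f).
Proof.
intros K0Sob K0closed Sf vs v hvs Pv cv.
assert (K0vf : K0 (vsub V v f)).
{ apply (K0closed (fun i => vsub V (vs i) f)); [intros i; apply hvs | apply VB; [exact Pv | apply Sf] |].
  apply (Un_cv_ext (fun i => nV U (vsub V (vs i) v))); [| exact cv].
  intros i; f_equal; vsolve (vs i) v f. }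
split; [| exact K0vf].
replace v with (vadd V (vsub V v f) f) by vsolve v f.
apply Sob_add; auto.
Qed.

Lemma Kshift_coercive : is_Poincare_set U K0 -> Sob U f ->
  forall r, exists B, forall v g, Kshift U K0 f v -> Wp U g -> Rel U v g ->
    nW U g <= r -> nV U v <= B.
Proof.
intros [_ [C [Cpos Poinc]]] [Pf [gf [Pgf Rf]]] r.
destruct (GS3 U f gf Rf Pf Pgf) as [gf' [Pgf' Rf']].
exists (C * (Rabs r + nW U gf') + nV U f).
intros v g [[Pv _] K0v] Pg Rvg gr.
assert (Rvf : Rel U (vsub V v f) (vadd W g gf')) by exact (G1 U _ _ _ _ Rvg Rf').
assert (Poinc_v := Poinc _ _ K0v (WD _ _ Pg Pgf') Rvf).
assert (tri_g := normD W (Wp U) (nW U) Wnorm g gf' Pg Pgf').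
assert (tri_v := norm_sub_ge V (Vp U) Vsubspace (nV U) Vnorm v f Pv Pf).
rewrite (norm_subC V (Vp U) Vsubspace (nV U) Vnorm) in tri_v by auto.
assert (C * nW U (vadd W g gf') <= C * (Rabs r + nW U gf'))
  by (apply Rmult_le_compat_l; [lra | pose proof (Rle_abs r); lra]).
lra.
Qed.

Lemma dirichlet_solution_exists : (exists u, K0 u) -> is_convex_set U K0 ->
  is_Poincare_set U K0 -> is_V_closed U K0 -> Sob U f ->
  exists u, is_Dirichlet_solution U (Kshift U K0 f) u.
Proof.
intros [u0 K0u0] K0conv K0Poinc K0closed Sf.
destruct (gradient_pairs_min_exists (Kshift U K0 f)) as (v & g & Kv & Pg & Rvg & vg_min).
- intros v [[Pv _] _]; exact Pv.
- destruct (proj1 K0Poinc u0 K0u0) as [Pu0 [g0 [Pg0 R0]]].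
  destruct Sf as [Pf [gf [Pgf Rf]]].
  exists (vadd V u0 f), (vadd W g0 gf); split; [split |].
  + apply Sob_add; split; eauto.
  + replace (vsub V (vadd V u0 f) f) with u0 by vsolve u0 f; exact K0u0.
  + split; [auto | apply G1; auto].
- apply Kshift_convex, K0conv.
- apply Kshift_closed; auto; apply K0Poinc.
- apply Kshift_coercive; auto.
- exists v; split; [exact Kv | exists g; split].
  + split; [exact Pg | split; [exact Rvg |]]; intros g' Pg' Rvg'; apply (vg_min v); auto.
  + intros w gw Kw [Pgw [Rwgw _]]; apply (vg_min w); auto.
Qed.

Lemma dirichlet_min_grad_unique : is_convex_set U K0 ->
  forall u1 u2 g1 g2,
    is_Dirichlet_solution U (Kshift U K0 f) u1 ->
    is_Dirichlet_solution U (Kshift U K0 f) u2 ->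
    is_min_grad U u1 g1 -> is_min_grad U u2 g2 -> g1 = g2.
Proof.
intros K0conv u1 u2 g1 g2 [K1 [gu1 [[Pgu1 [Ru1 m1]] s1]]] [K2 [gu2 [[Pgu2 [Ru2 m2]] s2]]]
  [Pg1 [Rg1 mg1]] [Pg2 [Rg2 mg2]].
assert (e1 : nW U g1 = nW U gu1) by (apply Rle_antisym; auto).
assert (e2 : nW U g2 = nW U gu2) by (apply Rle_antisym; auto).
assert (a1 : nW U gu1 <= nW U g2) by (apply (s1 u2 g2 K2); split; auto).
assert (a2 : nW U gu2 <= nW U g1) by (apply (s2 u1 g1 K1); split; auto).
set (w := vadd V (vscal V (/ 2) u1) (vscal V (1 - / 2) u2)).
set (h := vadd W (vscal W (/ 2) g1) (vscal W (1 - / 2) g2)).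
assert (Kw : Kshift U K0 f w) by (apply Kshift_convex; auto; lra).
assert (Rwh : Rel U w h) by (apply Rel_convex_comb; auto; lra).
destruct (min_grad_exists w (proj1 Kw)) as [gw [Pgw [Rwgw mgw]]].
assert (b1 : nW U gu1 <= nW U gw) by (apply (s1 w gw Kw); split; auto).
assert (b2 : nW U gw <= nW U h) by (apply mgw; unfold h; auto).
apply (strictly_convex_midpoint_eq W (Wp U) (nW U) Wsubspace Wnorm (proj2 (proj2 (GS2 U)))
         g1 g2 (nW U g1)); [auto | auto | reflexivity | lra |].
replace (vscal W (/ 2) (vadd W g1 g2)) with h by (unfold h; vsolve g1 g2; field).
lra.
Qed.

End Dirichlet.

End GradientSpaceTheory.

Theorem mainTheorem6 (U : GradientSpace) (K0 : Vt U -> Prop) (f : Vt U) :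
  (exists u, K0 u) ->
  is_convex_set U K0 ->
  is_Poincare_set U K0 ->
  is_V_closed U K0 ->
  Sob U f ->
  (exists u, is_Dirichlet_solution U (Kshift U K0 f) u) /\
  (forall u1 u2 g1 g2,
     is_Dirichlet_solution U (Kshift U K0 f) u1 ->
     is_Dirichlet_solution U (Kshift U K0 f) u2 ->
     is_min_grad U u1 g1 -> is_min_grad U u2 g2 -> g1 = g2).
Proof.
intros K0ne K0conv K0Poinc K0closed Sf; split.
- apply dirichlet_solution_exists; assumption.
- apply dirichlet_min_grad_unique; assumption.
Qed.
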